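(* Let $m\ge 3$ be an integer and let $n=2^m-1$. Let $\phi\in\mathbb{R}$ with binary expansion $\phi=2\pi\times 0.b_0b_1b_2\ldots$ (i.e. $\phi=\sum_{k\ge 0} b_k\,2\pi/2^{k+1}$, $b_k\in\{0,1\}$), and set $\phi_m=2^{m-1}\phi$ (so that, modulo $2\pi$, $\phi_m=2\pi\times 0.b_{m-1}b_mb_{m+1}\ldots$). Let $\alpha|0_L\rangle+\beta|1_L\rangle$ be any logical state of the code $\mathrm{QRM}(1,m)$. Apply $R_z(-\phi)$ transversally, i.e. apply $R_z(-\phi)^{\otimes n}$, and postselect on all stabilizer syndrome measurements ($X$-type and $Z$-type) giving the accepting outcome $+1$, i.e. apply the code-space projector $P_{+1}$. Then the resulting state is, up to normalization and a global phase, the logical state obtained by a logical rotation by the angle $$\phi'=\phi-2\arctan\left(\frac{\sin(\phi_m)}{(2^m-1)+\cos(\phi_m)}\right)$$ about the $Z$ axis, namely $\alpha|0_L\rangle+e^{i\phi'}\beta|1_L\rangle$.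
   Context: $Z=|0\rangle\langle0|-|1\rangle\langle1|$ and $R_z(\theta)=\exp(-i\theta Z/2)$. Classical first-order Reed–Muller code $\mathrm{RM}(1,m)$: binary code of length $2^m$ whose codewords are the truth tables (value lists over all $x\in\{0,1\}^m$) of affine Boolean functions $a_0+a_1x_1+\dots+a_mx_m$. The shortened code $\overline{\mathrm{RM}}(1,m)$ is obtained by keeping the codewords of $\mathrm{RM}(1,m)$ whose first coordinate (the value at $x=0$) is $0$ and deleting that coordinate; it has length $2^m-1$, one codeword of weight $0$ and $2^m-1$ codewords of weight $2^{m-1}$. The punctured code $\mathrm{RM}^*(1,m)$ is the code of length $2^m-1$ generated by $\overline{\mathrm{RM}}(1,m)$ together with the all-ones vector $\mathbf{1}$. The quantum Reed–Muller code $\mathrm{QRM}(1,m)$ is the CSS code on $n=2^m-1$ qubits with logical basis states $|x_L\rangle\propto\sum_{y\in\overline{\mathrm{RM}}(1,m)}|y+x\mathbf{1}\rangle$ for $x\in\{0,1\}$ (addition mod 2). Its $X$-type stabilizer generators $S^X_1,\dots,S^X_m$ are $X^{g_i}=\bigotimes_k X^{(g_i)_k}$ for a basis $g_1,\dots,g_m$ of $\overline{\mathrm{RM}}(1,m)$; its $Z$-type stabilizer generators $S^Z_1,\dots,S^Z_{2^m-m-2}$ are $Z^{h}$ for the rows $h$ of a parity-check matrix of $\mathrm{RM}^*(1,m)$. The code-space projector is $P_{+1}=\prod_{i}\frac{I+S^Z_i}{2}\prod_{i=1}^m\frac{I+S^X_i}{2}$. *)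

From mathcomp Require Import all_boot all_order all_algebra.
From mathcomp Require Import all_classical all_reals all_analysis.
From mathcomp Require Export complex.
Set Implicit Arguments. Unset Strict Implicit. Unset Printing Implicit Defensive.
Import GRing.Theory Num.Theory.
Local Open Scope ring_scope.

Definition nq (m : nat) : nat := (2 ^ m).-1.

Lemma succ_ord_proof m (k : 'I_(nq m)) : (k.+1 < 2 ^ m)%N.
Proof.
have h := ltn_ord k. rewrite /nq in h.
have h2 : (0 < 2 ^ m)%N by rewrite expn_gt0.
by rewrite -(prednK h2) ltnS.
Qed.

(* coordinate x = 0 of {0,1}^m, and the coordinate k+1 (k : 'I_n) *)
Definition ord_zero m : 'I_(2 ^ m) := Ordinal (expn_gt0 2 m).
Definition succ_ord m (k : 'I_(nq m)) : 'I_(2 ^ m) := Ordinal (succ_ord_proof k).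

(* i-th binary digit of the index j : the point x in {0,1}^m labelled by j *)
Definition bit_of m (j : 'I_(2 ^ m)) (i : 'I_m) : 'F_2 := (odd (j %/ 2 ^ i))%:R.

(* RM(1,m): truth tables (over all x in {0,1}^m) of affine Boolean functions
   a0 + a_1 x_1 + ... + a_m x_m *)
Definition RM1 (m : nat) : {set 'rV['F_2]_(2 ^ m)} :=
  [set \row_j (a0 + \sum_(i < m) a 0 i * bit_of j i) | a0 : 'F_2, a : 'rV['F_2]_m].

Definition RMbar (m : nat) : {set 'rV['F_2]_(nq m)} :=
  [set \row_k (c 0 (succ_ord k)) | c : 'rV['F_2]_(2 ^ m) in RM1 m & c 0 (ord_zero m) == 0].

(* punctured code RM*(1,m): generated by RMbar(1,m) and the all-ones vector
   (RMbar is a linear code, so its span with 1 is {y + b 1}) *)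
Definition RMstar (m : nat) : {set 'rV['F_2]_(nq m)} :=
  [set y + b *: const_mx 1 | y in RMbar m, b in [set: 'F_2]].

Definition is_basis_of (k n : nat) (g : 'M['F_2]_(k, n)) (C : {set 'rV['F_2]_n}) :=
  row_free g /\ forall v : 'rV['F_2]_n, (v \in C) = (v <= g)%MS.

Definition is_parity_check (r n : nat) (H : 'M['F_2]_(r, n)) (C : {set 'rV['F_2]_n}) :=
  row_free H /\ forall v : 'rV['F_2]_n, (v \in C) = (H *m v^T == 0).

(* n-qubit states: amplitudes indexed by computational basis strings z in F_2^n *)
Definition qstate (R : rcfType) (n : nat) := 'rV['F_2]_n -> R[i].

Definition expi (R : realType) (t : R) : R[i] := (cos t +i* sin t)%C.

Definition Xop (R : rcfType) n (g : 'rV['F_2]_n) (psi : qstate R n) : qstate R n :=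
  fun z => psi (z + g).
Definition Zop (R : rcfType) n (h : 'rV['F_2]_n) (psi : qstate R n) : qstate R n :=
  fun z => (if (h *m z^T) 0 0 == 0 then 1 else -1) * psi z.

Definition halfop (R : rcfType) n (S : qstate R n -> qstate R n) (psi : qstate R n)
  : qstate R n := fun z => (psi z + S psi z) / 2%:R.

Definition codeproj (R : rcfType) m r (g : 'M['F_2]_(m, nq m)) (H : 'M['F_2]_(r, nq m))
  (psi : qstate R (nq m)) : qstate R (nq m) :=
  foldr (fun i acc => halfop (Zop (row i H)) acc)
    (foldr (fun i acc => halfop (Xop (row i g)) acc) psi (enum 'I_m))
    (enum 'I_r).

(* R_z(t) = exp(-i t Z / 2) = diag(e^{-it/2}, e^{it/2}), applied transversally *)
Definition Rz1 (R : realType) (t : R) (b : 'F_2) : R[i] :=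
  if b == 0 then expi (- t / 2) else expi (t / 2).
Definition Rz_transversal (R : realType) n (t : R) (psi : qstate R n) : qstate R n :=
  fun z => (\prod_(k < n) Rz1 t (z 0 k)) * psi z.

(* logical basis states (unnormalized; both have the same norm) *)
Definition ket0L (R : rcfType) m : qstate R (nq m) :=
  fun z => if z \in RMbar m then 1 else 0.
Definition ket1L (R : rcfType) m : qstate R (nq m) :=
  fun z => if z + const_mx 1 \in RMbar m then 1 else 0.

(* The transversal rotation multiplies a basis string z by the phase
   e^(i (n/2 - wt z) phi), which depends only on the Hamming weight of z.
   Averaging over the X-stabilizers replaces this phase on a coset z + RMbar(1,m)
   by its sum over the coset, while the Z-stabilizers fix every state supported on
   RMbar(1,m) and its complement RMbar(1,m) + 1.  All nonzero codewords of RMbar(1,m)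
   have weight h = 2^(m-1) and n = 2h - 1, so up to a common factor the two coset
   sums are 1 + n e^(-i h phi) and e^(-i n phi) + n e^(-i (n-h) phi), whose ratio
   e^(i phi) (n + e^(-i h phi)) / (n + e^(i h phi)) is e^(i phi'). *)

From mathcomp Require Import all_boot all_order all_algebra.
From mathcomp Require Import all_classical all_reals all_analysis.
From mathcomp Require Import complex.
From mathcomp Require Import ring lra zify.
Import GRing.Theory Num.Theory.
Import numFieldNormedType.Exports.
Local Open Scope classical_set_scope.
Local Open Scope ring_scope.
Import Order.TTheory.
Set Implicit Arguments. Unset Strict Implicit. Unset Printing Implicit Defensive.

Section ComplexExponential.
Variable R : realType.
Implicit Types a b t : R.

Lemma expiD a b : expi (a + b) = expi a * expi b.
Proof.
rewrite /expi cosD sinD; apply/eqP; rewrite eq_complex /=.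
by apply/andP; split; apply/eqP; ring.
Qed.

Lemma expi0 : expi (0 : R) = 1.
Proof. by rewrite /expi cos0 sin0. Qed.

Lemma expiNr a : expi (- a) * expi a = 1.
Proof. by rewrite -expiD addNr expi0. Qed.

Lemma expi_neq0 a : expi a != 0.
Proof. by apply: contra_eq_neq (expiNr a) => ->; rewrite mulr0 eq_sym oner_neq0. Qed.

Lemma expi_sum n (f : 'I_n -> R) : expi (\sum_(k < n) f k) = \prod_(k < n) expi (f k).
Proof. exact: (big_morph _ expiD expi0). Qed.

(* [atan (sin t / (N + cos t))] is the argument of [N + e^(i t)], and
   [N + e^(-i t)] is its conjugate. *)
Lemma expi_atan (N t : R) : 0 < N + cos t ->
  expi (- (2 * atan (sin t / (N + cos t)))) * ((N%:C)%C + expi t) = (N%:C)%C + expi (- t).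
Proof.
set u := N + cos t; set x := sin t / u; set A := atan x => u_gt0.
have sin_t : sin t = x * u by rewrite /x mulrVK // unitfE gt_eqF.
have cosA_neq0 : cos A != 0.
  by rewrite /A cos_atan invr_eq0 gt_eqF // sqrtr_gt0; have := sqr_ge0 x; lra.
have sinA : sin A = x * cos A.
  by have := atanK x; rewrite -/A /tan => <-; rewrite mulrVK // unitfE.
have cosA2 : cos A ^+ 2 * (1 + x ^+ 2) = 1.
  by rewrite -[RHS](cos2Dsin2 A) sinA; ring.
rewrite /expi cosN sinN mulr_natl mulr2n cosD sinD sinA.
apply/eqP; rewrite eq_complex /= cosN sinN -/u sin_t.
by apply/andP; split; apply/eqP; rewrite -[RHS]mulr1 -cosA2; ring.
Qed.

Lemma phase_ratio (phi : R) (h N : nat) : N.+1 = (2 * h)%N -> (1 < N)%N ->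
  expi (- (N%:R * phi)) + expi (- ((N - h)%:R * phi)) *+ N =
  expi (phi - 2 * atan (sin (h%:R * phi) / (N%:R + cos (h%:R * phi))))
  * (1 + expi (- (h%:R * phi)) *+ N).
Proof.
move=> hN N_gt1; set e := expi (- (h%:R * phi)).
have NcosN : 0 < N%:R + cos (h%:R * phi).
  by have := cos_geN1 (h%:R * phi); rewrite -(ltr_nat R) in N_gt1; lra.
have hN' : N%:R = 2 * h%:R - 1 :> R.
  by have := congr1 (fun k => k%:R : R) hN; rewrite -addn1 natrD natrM; lra.
have -> : expi (- (N%:R * phi)) = expi phi * e * e.
  by rewrite -!expiD; congr expi; rewrite hN'; ring.
have -> : expi (- ((N - h)%:R * phi)) = expi phi * e.
  rewrite -expiD natrB; last by lia.
  by congr expi; rewrite hN'; ring.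
have -> : 1 + e *+ N = e * ((N%:R%:C)%C + expi (h%:R * phi)).
  by rewrite (rmorph_nat (real_complex R)) mulrDr expiNr mulr_natr addrC.
by rewrite [in RHS]expiD -[in RHS]mulrA [X in _ = _ * X]mulrCA expi_atan //
  (rmorph_nat (real_complex R)) -(mulr_natr (expi phi * e)) -/e; ring.
Qed.

Lemma phase_sum_neq0 (phi : R) (h N : nat) :
  (1 < N)%N -> 1 + expi (- (h%:R * phi)) *+ N != 0.
Proof.
move=> N_gt1; have -> : 1 + expi (- (h%:R * phi)) *+ N =
    expi (- (h%:R * phi)) * ((N%:R%:C)%C + expi (h%:R * phi)).
  by rewrite (rmorph_nat (real_complex R)) mulrDr expiNr mulr_natr addrC.
rewrite mulf_neq0 ?expi_neq0 //; apply/eqP => /(congr1 (@complex.Re R)) /=.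
by have := cos_geN1 (h%:R * phi); rewrite -(ltr_nat R) in N_gt1; lra.
Qed.

End ComplexExponential.

Lemma F2_cases (x : 'F_2) : x = 0 \/ x = 1.
Proof. by case: x => [[|[|k]] // lt_x2]; [left | right]; apply/eqP. Qed.

Lemma F2_add1_neq0 (x : 'F_2) : addn (x + 1 != 0) (x != 0) = 1%N.
Proof. by case: (F2_cases x) => ->. Qed.

Lemma row_F2_addrr n (v : 'rV['F_2]_n) : v + v = 0.
Proof. by apply/rowP => k; rewrite !mxE addrr_pchar2 // pchar_Fp. Qed.

Definition weight {n} (w : 'rV['F_2]_n) : nat := (\sum_(k < n) (w 0 k != 0)%R)%N.

Lemma weight0 n : weight (0 : 'rV['F_2]_n) = 0%N.
Proof. by rewrite /weight big1 // => k _; rewrite mxE eqxx. Qed.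

Lemma weight_add1 n (w : 'rV['F_2]_n) : weight (w + const_mx 1) = (n - weight w)%N.
Proof.
suff sum_n : addn (weight (w + const_mx 1)) (weight w) = n.
  by move: sum_n; lia.
rewrite /weight -big_split /= -[n in RHS]card_ord -sum1_card.
by apply: eq_bigr => k _; rewrite !mxE F2_add1_neq0.
Qed.

Lemma Rz_transversal_phase (R : realType) n (phi : R) (w : 'rV['F_2]_n) :
  \prod_(k < n) Rz1 (- phi) (w 0 k)
  = expi (n%:R * (phi / 2)) * expi (- ((weight w)%:R * phi)).
Proof.
rewrite -expiD (eq_bigr (fun k => expi (phi / 2 - (w 0 k != 0)%:R * phi))); last first.
  by move=> k _; rewrite /Rz1; case: (F2_cases (w 0 k)) => -> /=; congr expi; lra.
by rewrite -expi_sum sumrB sumr_const card_ord -mulr_suml -natr_sum !mulr_natl.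
Qed.

Definition lin_form m (a : nat -> 'F_2) (j : nat) : 'F_2 :=
  \sum_(i < m) a i * (odd (j %/ 2 ^ i))%:R.

Lemma lin_form0 m a : lin_form m a 0 = 0.
Proof. by apply: big1 => i _; rewrite div0n mulr0. Qed.

Lemma lin_formS_low m a j : (j < 2 ^ m)%N -> lin_form m.+1 a j = lin_form m a j.
Proof. by move=> lt_j; rewrite /lin_form big_ord_recr /= divn_small // mulr0 addr0. Qed.

Lemma lin_formS_high m a j : (j < 2 ^ m)%N ->
  lin_form m.+1 a (j + 2 ^ m) = lin_form m a j + a m.
Proof.
move=> lt_j; rewrite /lin_form big_ord_recr /=.
rewrite divnDr ?dvdnn // divnn expn_gt0 divn_small // add0n mulr1.
congr (_ + _); apply: eq_bigr => i _.
have le_im : (i <= m)%N by apply: ltnW.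
have -> : (2 ^ m = 2 ^ (m - i) * 2 ^ i)%N by rewrite -expnD subnK.
rewrite divnDr ?dvdn_mull // mulnK ?expn_gt0 //.
by rewrite oddD oddX subn_eq0 leqNgt ltn_ord addbF.
Qed.

Lemma count_lin_form_neq0 m a : (exists2 i, (i < m)%N & a i != 0) ->
  (\sum_(0 <= j < 2 ^ m) (lin_form m a j != 0)%R)%N = (2 ^ m.-1)%N.
Proof.
elim: m => [|m IH] [i lt_im a_i]; first by [].
rewrite expnS mul2n -addnn (@big_cat_nat _ _ _ (2 ^ m)%N) ?leq_addr //=.
rewrite -{2}(add0n (2 ^ m)%N) big_addn addnK.
rewrite (@eq_big_nat _ _ _ 0 (2 ^ m)%N _ (fun j => nat_of_bool (lin_form m a j != 0)));
  last first.
  by move=> j /andP [_ lt_j]; rewrite lin_formS_low.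
rewrite [X in (_ + X)%N](@eq_big_nat _ _ _ 0 (2 ^ m)%N _
    (fun j => nat_of_bool (lin_form m a j + a m != 0)));
  last first.
  by move=> j /andP [_ lt_j]; rewrite lin_formS_high.
case: (F2_cases (a m)) => a_m.
- have lt_im' : (i < m)%N.
    by rewrite ltn_neqAle -ltnS lt_im andbT; apply: contra_neq a_i => ->.
  under [X in (_ + X)%N]eq_bigr do rewrite a_m addr0.
  rewrite IH; last by exists i.
  by rewrite addnn -mul2n -expnS prednK // (leq_ltn_trans _ lt_im').
- rewrite a_m -big_split /= (eq_bigr (fun _ => 1%N)) => [|j _]; last first.
    by rewrite addnC F2_add1_neq0.
  by rewrite big_const_nat subn0 iter_addn_0 mul1n.
Qed.

Lemma RMbar_lin_form m y : y \in RMbar m ->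
  exists a : nat -> 'F_2, y = \row_k lin_form m a k.+1.
Proof.
case/imsetP => c; rewrite inE => /andP [/imset2P [a0 a _ _ ->] c0] ->.
exists (fun i => if insub i is Some i' then a 0 i' else 0).
have bit0 i : bit_of (ord_zero m) i = 0 by rewrite /bit_of /= div0n.
move: c0; rewrite mxE (eq_bigr (fun _ => 0)) => [|i _]; last by rewrite bit0 mulr0.
rewrite big1_eq addr0 => /eqP ->; apply/rowP => k.
by rewrite !mxE add0r; apply: eq_bigr => i _; rewrite valK.
Qed.

Lemma weight_RMbar m y : y \in RMbar m -> y != 0 -> weight y = (2 ^ m.-1)%N.
Proof.
case/RMbar_lin_form => a -> y_neq0.
have [i lt_im a_i] : exists2 i, (i < m)%N & a i != 0.
  case: (pickP [pred i : 'I_m | a i != 0]) => [i a_i | a0]; first by exists i.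
  case/eqP: y_neq0; apply/rowP => k; rewrite !mxE; apply: big1 => i _.
  by move/negbFE/eqP: (a0 i) => ->; rewrite mul0r.
rewrite -(@count_lin_form_neq0 m a); last by exists i.
rewrite -(prednK (expn_gt0 2 m)) big_nat_recl // lin_form0 eqxx add0n big_mkord.
by apply: eq_bigr => k _; rewrite mxE.
Qed.

Definition supported {k} (s : seq 'I_k) (a : 'rV['F_2]_k) : bool :=
  [forall j, (j \notin s) ==> (a 0 j == 0)].

Section Support.
Variables (k : nat) (s : seq 'I_k) (i : 'I_k).
Implicit Type a : 'rV['F_2]_k.

Lemma supported_nil a : supported [::] a = (a == 0).
Proof.
apply/forallP/eqP => [a0 | -> j]; last by rewrite mxE.
by apply/rowP => j; apply/eqP; rewrite mxE; exact: a0 j.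
Qed.

Lemma supported_enum a : supported (enum 'I_k) a.
Proof. by apply/forallP => j; rewrite mem_enum. Qed.

Lemma supported_cons_eq0 a : i \notin s ->
  supported s a = supported (i :: s) a && (a 0 i == 0).
Proof.
move=> i_notin_s; apply/forallP/andP => [a_supp | [/forallP a_supp a_i] j].
  split; last exact: implyP (a_supp i) i_notin_s.
  apply/forallP => j; apply/implyP; rewrite inE negb_or => /andP [_].
  exact: implyP (a_supp j).
apply/implyP => j_notin_s; have [-> // | ne_ji] := eqVneq j i.
by apply: implyP (a_supp j) _; rewrite inE negb_or ne_ji.
Qed.

Lemma supported_cons_addr_delta a :
  supported (i :: s) (a + delta_mx 0 i) = supported (i :: s) a.
Proof.
apply: eq_forallb => j; rewrite !mxE inE eqxx /=.
by have [-> | ne_ji] := eqVneq j i; rewrite ?eqxx //= addr0.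
Qed.

Lemma sum_supported_cons (V : nmodType) (F : 'rV['F_2]_k -> V) : i \notin s ->
  \sum_(a | supported (i :: s) a) F a
  = \sum_(a | supported s a) (F a + F (a + delta_mx 0 i)).
Proof.
move=> i_notin_s; rewrite big_split /= (bigID (fun a => a 0 i == 0)) /=.
congr (_ + _); first by apply: eq_bigl => a; rewrite supported_cons_eq0.
rewrite (reindex_inj (addIr (delta_mx 0 i))) /=; apply: eq_bigl => a.
rewrite supported_cons_eq0 // supported_cons_addr_delta !mxE !eqxx /=.
by case: (F2_cases (a 0 i)) => ->.
Qed.

End Support.

Section StabilizerProjectors.
Variables (R : rcfType) (n : nat).
Implicit Type psi : qstate R n.

Lemma foldr_halfop_X k (g : 'M['F_2]_(k, n)) (s : seq 'I_k) psi z : uniq s ->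
  foldr (fun i acc => halfop (Xop (row i g)) acc) psi s z
  = (2 ^ size s)%:R^-1 * \sum_(a | supported s a) psi (z + a *m g).
Proof.
elim: s z => [|i s IH] z /=.
  rewrite expn0 invr1 mul1r (big_pred1 0) ?mul0mx ?addr0 // => a.
  by rewrite supported_nil.
case/andP => i_notin_s uniq_s; rewrite /halfop /Xop !IH // sum_supported_cons //.
rewrite big_split /= expnS natrM invfM.
under [X in _ = _ * (_ + X)]eq_bigr do rewrite mulmxDl -rowE addrA [z + _ + _]addrAC.
ring.
Qed.

Lemma foldr_halfop_Z r (H : 'M['F_2]_(r, n)) (s : seq 'I_r) psi :
  (forall z, psi z != 0 -> H *m z^T == 0) ->
  foldr (fun i acc => halfop (Zop (row i H)) acc) psi s = psi.
Proof.
move=> psi_syndrome0; elim: s => [// | i s IH] /=; rewrite IH.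
apply: funext => z; rewrite /halfop /Zop.
have [-> | psi_z] := eqVneq (psi z) 0; first by rewrite mulr0 addr0 mul0r.
rewrite -row_mul (eqP (psi_syndrome0 z psi_z)) !mxE eqxx mul1r.
by rewrite -mulr2n -[psi z *+ 2]mulr_natr mulfK // pnatr_eq0.
Qed.

End StabilizerProjectors.

Lemma mem_RMstar m z :
  (z \in RMbar m) || (z + const_mx 1 \in RMbar m) -> z \in RMstar m.
Proof.
case/orP => z_in; apply/imset2P.
  by exists z 0; rewrite ?inE // scale0r addr0.
by exists (z + const_mx 1) 1; rewrite ?inE // scale1r -addrA row_F2_addrr addr0.
Qed.

Section ShortenedReedMuller.
Variables (m : nat) (g : 'M['F_2]_(m, nq m)).
Hypotheses (m_gt1 : (1 < m)%N) (g_basis : is_basis_of g (RMbar m)).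
Local Notation n := (nq m).
Local Notation one := (const_mx 1 : 'rV['F_2]_(nq m)).

Lemma nq_succ : n.+1 = (2 * 2 ^ m.-1)%N.
Proof. by rewrite prednK ?expn_gt0 // -expnS prednK // ltnW. Qed.

Lemma nq_gt1 : (1 < n)%N.
Proof.
have : (2 ^ 1 <= 2 ^ m.-1)%N by rewrite leq_exp2l //; lia.
by have := nq_succ; lia.
Qed.

Lemma RMbar_mulmxP y : reflect (exists a, y = a *m g) (y \in RMbar m).
Proof. by rewrite g_basis.2; apply: (iffP submxP) => [] [a ->]; exists a. Qed.

Lemma RMbar_addl y z : y \in RMbar m -> (y + z \in RMbar m) = (z \in RMbar m).
Proof.
case/RMbar_mulmxP => b ->; apply/RMbar_mulmxP/RMbar_mulmxP => [[a yz] | [a ->]].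
  by exists (a - b); rewrite mulmxBl -yz addrC addKr.
by exists (b + a); rewrite mulmxDl.
Qed.

Lemma weight_enumerator (V : nmodType) (F : nat -> V) :
  \sum_(a : 'rV['F_2]_m) F (weight (a *m g)) = F 0%N + F (2 ^ m.-1)%N *+ n.
Proof.
rewrite (bigD1 0) //= mul0mx weight0; congr (_ + _).
rewrite (eq_bigr (fun _ => F (2 ^ m.-1)%N)) => [|a a_neq0]; last first.
  rewrite weight_RMbar //; first by apply/RMbar_mulmxP; exists a.
  apply: contra a_neq0 => /eqP ag0; apply/eqP/(row_free_inj g_basis.1).
  by rewrite ag0 mul0mx.
by rewrite sumr_const cardC1 card_mx card_Fp // mul1n.
Qed.

Lemma weight_enumerator_add1 (V : nmodType) (F : nat -> V) :
  \sum_(a : 'rV['F_2]_m) F (weight (a *m g + one)) = F n + F (n - 2 ^ m.-1)%N *+ n.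
Proof.
under eq_bigr do rewrite weight_add1.
by rewrite (weight_enumerator (fun k => F (n - k)%N)) subn0.
Qed.

Lemma const1_notin_RMbar : one \notin RMbar m.
Proof.
have weight_one : weight one = n by rewrite -[one]add0r weight_add1 weight0 subn0.
apply/negP => one_in; have := nq_gt1; have := nq_succ.
have [one0 | one_neq0] := eqVneq one 0.
  by move: weight_one; rewrite one0 weight0; lia.
by move: (weight_RMbar one_in one_neq0); rewrite weight_one; lia.
Qed.

Variable R : realType.
Implicit Type phi : R.

Definition code_phase phi (z : 'rV['F_2]_n) : R[i] :=
  \sum_(a : 'rV['F_2]_m) \prod_(k < n) Rz1 (- phi) ((z + a *m g) 0 k).

Lemma code_phase_shift phi z b : code_phase phi (z + b *m g) = code_phase phi z.
Proof.
rewrite /code_phase [in RHS](reindex_inj (addrI b)) /=.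
by apply: eq_bigr => a _; rewrite mulmxDl addrA.
Qed.

Lemma code_phase0 phi : code_phase phi 0
  = expi (n%:R * (phi / 2)) * (1 + expi (- ((2 ^ m.-1)%:R * phi)) *+ n).
Proof.
rewrite /code_phase; under eq_bigr do rewrite add0r Rz_transversal_phase.
rewrite -mulr_sumr (weight_enumerator (fun k => expi (- (k%:R * phi)))).
by rewrite mul0r oppr0 expi0.
Qed.

Lemma code_phase1 phi : code_phase phi one
  = expi (n%:R * (phi / 2))
    * (expi (- (n%:R * phi)) + expi (- ((n - 2 ^ m.-1)%:R * phi)) *+ n).
Proof.
rewrite /code_phase; under eq_bigr do rewrite addrC Rz_transversal_phase.
by rewrite -mulr_sumr (weight_enumerator_add1 (fun k => expi (- (k%:R * phi)))).
Qed.

Lemma code_phase_ratio phi : code_phase phi one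
  = expi (phi - 2 * atan (sin ((2 ^ m.-1)%:R * phi) / (n%:R + cos ((2 ^ m.-1)%:R * phi))))
    * code_phase phi 0.
Proof. by rewrite code_phase0 code_phase1 (phase_ratio _ nq_succ nq_gt1) mulrCA. Qed.

Lemma code_phase0_neq0 phi : code_phase phi 0 != 0.
Proof. by rewrite code_phase0 mulf_neq0 ?expi_neq0 ?phase_sum_neq0 ?nq_gt1. Qed.

Lemma ket0L_shift z b : @ket0L R m (z + b *m g) = @ket0L R m z.
Proof. by rewrite /ket0L addrC RMbar_addl //; apply/RMbar_mulmxP; exists b. Qed.

Lemma ket1L_shift z b : @ket1L R m (z + b *m g) = @ket1L R m z.
Proof. by rewrite /ket1L addrAC addrC RMbar_addl //; apply/RMbar_mulmxP; exists b. Qed.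

Lemma Xproj_Rz phi (psi : qstate R n) : (forall z b, psi (z + b *m g) = psi z) ->
  foldr (fun i acc => halfop (Xop (row i g)) acc) (Rz_transversal (- phi) psi) (enum 'I_m)
  = fun z => (2 ^ m)%:R^-1 * code_phase phi z * psi z.
Proof.
move=> psi_shift; apply: funext => z.
rewrite foldr_halfop_X ?enum_uniq // size_enum_ord -mulrA /code_phase mulr_suml.
congr (_ * _); apply: eq_big => [a | a _]; first exact: supported_enum.
by rewrite /Rz_transversal psi_shift.
Qed.

Lemma Xproj_Rz_logical phi (alpha beta : R[i]) :
  let phi' :=
    phi - 2 * atan (sin ((2 ^ m.-1)%:R * phi) / (n%:R + cos ((2 ^ m.-1)%:R * phi))) in
  foldr (fun i acc => halfop (Xop (row i g)) acc)
    (Rz_transversal (- phi) (fun z => alpha * @ket0L R m z + beta * @ket1L R m z))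
    (enum 'I_m)
  = fun z => (2 ^ m)%:R^-1 * code_phase phi 0
             * (alpha * @ket0L R m z + expi phi' * beta * @ket1L R m z).
Proof.
rewrite Xproj_Rz => [|z b]; last by rewrite ket0L_shift ket1L_shift.
apply: funext => z; rewrite /ket0L /ket1L.
have [z_in | z_notin] := boolP (z \in RMbar m).
  rewrite RMbar_addl // (negPf const1_notin_RMbar) !mulr0 !addr0.
  by case/RMbar_mulmxP: z_in => b ->; rewrite -[b *m g]add0r code_phase_shift.
have [z1_in | z1_notin] := boolP (z + one \in RMbar m).
  case/RMbar_mulmxP: (z1_in) => b z1_bg.
  have -> : z = one + b *m g by rewrite -z1_bg addrCA row_F2_addrr addr0.
  by rewrite code_phase_shift code_phase_ratio; ring.
by rewrite !(mulr0, addr0).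
Qed.

End ShortenedReedMuller.

Theorem lemma1 (R : realType) (m : nat) (hm : (3 <= m)%N) (phi : R)
  (hphi : exists b : nat -> bool,
     (fun N : nat => \sum_(k < N) (b k)%:R * (2 * pi / 2 ^+ k.+1)) @ \oo --> phi)
  (g : 'M['F_2]_(m, nq m)) (hg : is_basis_of g (RMbar m))
  (H : 'M['F_2]_(2 ^ m - m - 2, nq m)) (hH : is_parity_check H (RMstar m))
  (alpha beta : R[i]) :
  let phim := 2 ^+ m.-1 * phi in
  let phi' := phi - 2 * atan (sin phim / ((2 ^ m - 1)%:R + cos phim)) in
  exists c : R[i], c != 0 /\
    codeproj g H (Rz_transversal (- phi)
                    (fun z => alpha * @ket0L R m z + beta * @ket1L R m z))
    = (fun z => c * (alpha * @ket0L R m z + expi phi' * beta * @ket1L R m z)).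
Proof.
move=> phim phi'.
have m_gt1 : (1 < m)%N by apply: leq_trans hm.
rewrite /phi' /phim -natrX subn1.
exists ((2 ^ m)%:R^-1 * code_phase g phi 0); split.
  by rewrite mulf_neq0 ?code_phase0_neq0 // invr_eq0 pnatr_eq0 expn_eq0.
rewrite /codeproj (Xproj_Rz_logical m_gt1 hg).
apply: foldr_halfop_Z => z; rewrite -hH.2 => psi_z; apply: mem_RMstar.
case/boolP: (_ || _) => // /norP [z0 z1]; move: psi_z.
by rewrite /ket0L /ket1L (negPf z0) (negPf z1) !mulr0 addr0 mulr0 eqxx.
Qed.
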